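(* Let $(\llbracket\cdot\rrbracket,\varphi,\asymp)$ be a valid encoding from $\pi$ into $\pi_{\neg m}$. Let $N\subseteq\mathcal{N}$ be a finite set of names, $a,b\in\mathcal{N}$ with $a\neq b$, and let $\mathcal{C}_{[a=b]}^{N\cup\{a,b\}}(\_)$ be the context introduced by the encoding to translate the match prefix $[a=b]$ (for free-name set $N\cup\{a,b\}$). Then this context cannot unguard its hole: for every context $\mathcal{C}'(\_)$, if $\mathcal{C}_{[a=b]}^{N\cup\{a,b\}}(\_)\longmapsto^*\mathcal{C}'(\_)$ then $\_\notin\mathrm{ung}(\mathcal{C}'(\_))$.
   Context: Let $\mathcal{N}$ be a countably infinite set of names. Full $\pi$-calculus terms ($\mathcal{P}_\pi$): $P ::= \mathbf{0} \mid x(z).P \mid \overline{x}\langle y\rangle.P \mid \tau.P \mid [a=b]P \mid P_1 + P_2 \mid P_1 \mid P_2 \mid (\nu z)P \mid\ !P \mid \checkmark$; $\pi_{\neg m}$ ($\mathcal{P}_{\pi_{\neg m}}$): same without match prefix. Structural congruence $\equiv$: least congruence with alpha-conversion, $[a=a]P\equiv P$, $!P\equiv P\mid !P$, commutative monoid laws for $+,\mid$ with unit $\mathbf{0}$, $(\nu z)\mathbf{0}\equiv\mathbf{0}$, swapping restrictions, $(\nu z)(P\mid Q)\equiv P\mid(\nu z)Q$ for $z\notin\mathrm{fn}(P)$. Reduction: $\tau.P\longmapsto P$; $(\overline{x}\langle y\rangle.P+P')\mid(x(z).Q+Q')\longmapsto P\mid\{y/z\}Q$; closed under choice, parallel, restriction,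 $\equiv$. Unguarded subterms $\mathrm{ung}$: $\{P\}\cup\mathrm{ung}(Q)$ for $P=[a=a]Q,(\nu z)Q,{!Q}$; $\{P\}\cup\mathrm{ung}(Q_1)\cup\mathrm{ung}(Q_2)$ for $P=Q_1+Q_2, Q_1\mid Q_2$; $\{P\}$ otherwise; for contexts $\mathrm{ung}(\_)=\{\_\}$. $P$ is successful if $\checkmark\in\mathrm{ung}(P)$, reaches success if $P\longmapsto^*Q$ with $Q$ successful. An encoding from $\pi$ into $\pi_{\neg m}$ is a triple $(\llbracket\cdot\rrbracket,\varphi,\asymp)$ with $\llbracket\cdot\rrbracket:\mathcal{P}_\pi\to\mathcal{P}_{\pi_{\neg m}}$, renaming policy $\varphi:\mathcal{N}\to\mathcal{N}^k$ (fixed $k$) with $\varphi(u)\cap\varphi(v)=\emptyset$ for $u\neq v$, and $\asymp$ a success-respecting reduction bisimulation on $\pi_{\neg m}$. It is valid if it satisfies: compositionality (for each $k$-ary operator $\mathrm{op}$, each match prefix $[a=b]$ counting as a unary operator, and each $N$, there is a context $\mathcal{C}_{\mathrm{op}}^N$ with $\llbracket\mathrm{op}(S_1,\dots,S_k)\rrbracket=\mathcal{C}_{\mathrm{op}}^N(\llbracket S_1\rrbracket,\dots,\llbracket S_k\rrbracket)$ whenever $\mathrm{fn}(\mathrm{op}(S_1,\dots,S_k))=N$); name invariance ($\llbracket\sigma(S)\rrbracket=\sigma'(\llbracket S\rrbracket)$ for injective $\sigma$, $\asymp$ otherwise, where $\varphi(\sigma(a))=\sigma'(\varphi(a))$ for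 all $a$); operational completeness ($S\longmapsto^*S'$ implies $\llbracket S\rrbracket\longmapsto^*\asymp\llbracket S'\rrbracket$); operational soundness ($\llbracket S\rrbracket\longmapsto^*T$ implies some $S\longmapsto^*S'$ with $T\longmapsto^*\asymp\llbracket S'\rrbracket$); divergence reflection (if $\llbracket S\rrbracket$ diverges so does $S$); success sensitiveness ($S$ reaches success iff $\llbracket S\rrbracket$ does). *)

(* Pi-calculus with match, its match-free fragment, contexts,
   and valid encodings (Gorla-style criteria), in de Bruijn representation:
   free names are natural numbers (a countably infinite set of names);
   the binders (input prefix, restriction) bind index 0, so alpha-conversion
   is syntactic identity. *)
From Stdlib Require Import List Arith Relations.
Import ListNotations.

Definition name := nat.

(* Terms.  [Hole i s] is the i-th hole of a context; [s] is the renaming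
   (pending substitution) that is applied to whatever is put into the hole;
   it lets contexts bind / capture the free names of the filled-in process. *)
Inductive term : Type :=
| Nil   : term
| In    : name -> term -> term
| Out   : name -> name -> term -> term
| Tau   : term -> term
| Match : name -> name -> term -> term
| Sum   : term -> term -> term
| Par   : term -> term -> term
| Res   : term -> term
| Bang  : term -> term
| Succ  : term
| Hole  : nat -> (name -> name) -> term.

Definition up (s : name -> name) : name -> name :=
  fun n => match n with 0 => 0 | S m => S (s m) end.

Fixpoint ren (s : name -> name) (P : term) : term :=
  match P with
  | Nil => Nil
  | In x Q => In (s x) (ren (up s) Q)
  | Out x y Q => Out (s x) (s y) (ren s Q)
  | Tau Q => Tau (ren s Q)
  | Match a b Q => Match (s a) (s b) (ren s Q)
  | Sum Q1 Q2 => Sum (ren s Q1) (ren s Q2)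
  | Par Q1 Q2 => Par (ren s Q1) (ren s Q2)
  | Res Q => Res (ren (up s) Q)
  | Bang Q => Bang (ren s Q)
  | Succ => Succ
  | Hole i t => Hole i (fun n => s (t n))
  end.

Definition subst1 (y : name) : name -> name :=
  fun n => match n with 0 => y | S m => m end.
Definition swap01 : name -> name :=
  fun n => match n with 0 => 1 | 1 => 0 | _ => n end.

Fixpoint fn (P : term) (n : name) : Prop :=
  match P with
  | Nil => False
  | In x Q => n = x \/ fn Q (S n)
  | Out x y Q => n = x \/ n = y \/ fn Q n
  | Tau Q => fn Q n
  | Match a b Q => n = a \/ n = b \/ fn Q n
  | Sum Q1 Q2 => fn Q1 n \/ fn Q2 n
  | Par Q1 Q2 => fn Q1 n \/ fn Q2 n
  | Res Q => fn Q (S n)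
  | Bang Q => fn Q n
  | Succ => False
  | Hole _ _ => False
  end.

Definition fn_is (P : term) (N : list name) : Prop :=
  forall n, fn P n <-> List.In n N.

Fixpoint no_hole (P : term) : Prop :=
  match P with
  | Nil | Succ => True
  | In _ Q | Out _ _ Q | Tau Q | Match _ _ Q | Res Q | Bang Q => no_hole Q
  | Sum Q1 Q2 | Par Q1 Q2 => no_hole Q1 /\ no_hole Q2
  | Hole _ _ => False
  end.

Fixpoint no_match (P : term) : Prop :=
  match P with
  | Nil | Succ | Hole _ _ => True
  | In _ Q | Out _ _ Q | Tau Q | Res Q | Bang Q => no_match Q
  | Match _ _ _ => False
  | Sum Q1 Q2 | Par Q1 Q2 => no_match Q1 /\ no_match Q2
  end.

Fixpoint holes_below (k : nat) (P : term) : Prop :=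
  match P with
  | Nil | Succ => True
  | In _ Q | Out _ _ Q | Tau Q | Match _ _ Q | Res Q | Bang Q => holes_below k Q
  | Sum Q1 Q2 | Par Q1 Q2 => holes_below k Q1 /\ holes_below k Q2
  | Hole i _ => i < k
  end.

Definition is_pi (P : term) : Prop := no_hole P.
Definition is_pinm (P : term) : Prop := no_hole P /\ no_match P.
Definition is_ctx_pinm (k : nat) (C : term) : Prop := no_match C /\ holes_below k C.

Fixpoint fill (C : term) (Ps : list term) : term :=
  match C with
  | Nil => Nil
  | In x Q => In x (fill Q Ps)
  | Out x y Q => Out x y (fill Q Ps)
  | Tau Q => Tau (fill Q Ps)
  | Match a b Q => Match a b (fill Q Ps)
  | Sum Q1 Q2 => Sum (fill Q1 Ps) (fill Q2 Ps)
  | Par Q1 Q2 => Par (fill Q1 Ps) (fill Q2 Ps)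
  | Res Q => Res (fill Q Ps)
  | Bang Q => Bang (fill Q Ps)
  | Succ => Succ
  | Hole i s => ren s (nth i Ps Nil)
  end.

Inductive sc : term -> term -> Prop :=
| sc_refl P : sc P P
| sc_sym P Q : sc P Q -> sc Q P
| sc_trans P Q R : sc P Q -> sc Q R -> sc P R
| sc_In x P Q : sc P Q -> sc (In x P) (In x Q)
| sc_Out x y P Q : sc P Q -> sc (Out x y P) (Out x y Q)
| sc_Tau P Q : sc P Q -> sc (Tau P) (Tau Q)
| sc_Match a b P Q : sc P Q -> sc (Match a b P) (Match a b Q)
| sc_Sum P P' Q Q' : sc P P' -> sc Q Q' -> sc (Sum P Q) (Sum P' Q')
| sc_Par P P' Q Q' : sc P P' -> sc Q Q' -> sc (Par P Q) (Par P' Q')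
| sc_Res P Q : sc P Q -> sc (Res P) (Res Q)
| sc_Bang P Q : sc P Q -> sc (Bang P) (Bang Q)
| sc_match_refl a P : sc (Match a a P) P
| sc_bang_unfold P : sc (Bang P) (Par P (Bang P))
| sc_sum_comm P Q : sc (Sum P Q) (Sum Q P)
| sc_sum_assoc P Q R : sc (Sum P (Sum Q R)) (Sum (Sum P Q) R)
| sc_sum_nil P : sc (Sum P Nil) P
| sc_par_comm P Q : sc (Par P Q) (Par Q P)
| sc_par_assoc P Q R : sc (Par P (Par Q R)) (Par (Par P Q) R)
| sc_par_nil P : sc (Par P Nil) P
| sc_res_nil : sc (Res Nil) Nil
| sc_res_swap P : sc (Res (Res P)) (Res (Res (ren swap01 P)))
  (* (nu z)(P | Q) == P | (nu z)Q  for z not free in P *)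
| sc_res_par P Q : sc (Res (Par (ren S P) Q)) (Par P (Res Q)).

Inductive red : term -> term -> Prop :=
| red_tau P : red (Tau P) P
| red_com x y P P' Q Q' :
    red (Par (Sum (Out x y P) P') (Sum (In x Q) Q')) (Par P (ren (subst1 y) Q))
| red_sum P P' Q : red P P' -> red (Sum P Q) P'
| red_par P P' Q : red P P' -> red (Par P Q) (Par P' Q)
| red_res P P' : red P P' -> red (Res P) (Res P')
| red_sc P P0 Q0 Q : sc P P0 -> red P0 Q0 -> sc Q0 Q -> red P Q.

Definition red_star : term -> term -> Prop := clos_refl_trans term red.

Fixpoint ung (P : term) (T : term) : Prop :=
  T = P \/
  match P with
  | Match a b Q => a = b /\ ung Q T
  | Res Q | Bang Q => ung Q T
  | Sum Q1 Q2 | Par Q1 Q2 => ung Q1 T \/ ung Q2 T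
  | _ => False
  end.

Definition successful (P : term) : Prop := ung P Succ.
Definition reaches_success (P : term) : Prop :=
  exists Q, red_star P Q /\ successful Q.
Definition diverges (P : term) : Prop :=
  exists f : nat -> term, f 0 = P /\ forall n, red (f n) (f (S n)).

Definition hole_unguarded (C : term) : Prop :=
  exists i s, ung C (Hole i s).

Definition success_resp_red_bisim (R : term -> term -> Prop) : Prop :=
  forall P Q, R P Q ->
    (forall P', red P P' -> exists Q', red_star Q Q' /\ R P' Q') /\
    (forall Q', red Q Q' -> exists P', red_star P P' /\ R P' Q') /\
    (reaches_success P <-> reaches_success Q).

Inductive op : Type :=
| ONil | OIn (x : name) | OOut (x y : name) | OTau | OMatch (a b : name)
| OSum | OPar | ORes | OBang | OSucc.

Definition arity (o : op) : nat :=
  match o with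
  | ONil | OSucc => 0
  | OSum | OPar => 2
  | _ => 1
  end.

Definition op_apply (o : op) (Ss : list term) : term :=
  let S1 := nth 0 Ss Nil in
  let S2 := nth 1 Ss Nil in
  match o with
  | ONil => Nil
  | OIn x => In x S1
  | OOut x y => Out x y S1
  | OTau => Tau S1
  | OMatch a b => Match a b S1
  | OSum => Sum S1 S2
  | OPar => Par S1 S2
  | ORes => Res S1
  | OBang => Bang S1
  | OSucc => Succ
  end.

(* An encoding ([[.]], phi, asymp) from pi into pi_{-m}; phi : N -> N^k is
   represented as phi u i (i < k). *)
Record valid_encoding (enc : term -> term) (k : nat) (phi : name -> nat -> name)
    (asymp : term -> term -> Prop) : Prop := {
  ve_target : forall S, is_pi S -> is_pinm (enc S);
  ve_phi_disjoint : forall u v i j, i < k -> j < k -> u <> v -> phi u i <> phi v j;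
  ve_bisim : success_resp_red_bisim asymp;
  ve_compositional : forall (o : op) (N : list name),
    exists C, is_ctx_pinm (arity o) C /\
      forall Ss, length Ss = arity o -> Forall is_pi Ss ->
        fn_is (op_apply o Ss) N -> enc (op_apply o Ss) = fill C (map enc Ss);
  ve_name_invariance : forall (S : term) (sigma : name -> name), is_pi S ->
    exists sigma' : name -> name,
      (forall a i, i < k -> phi (sigma a) i = sigma' (phi a i)) /\
      ((forall u v, sigma u = sigma v -> u = v) ->
         enc (ren sigma S) = ren sigma' (enc S)) /\
      (~ (forall u v, sigma u = sigma v -> u = v) ->
         asymp (enc (ren sigma S)) (ren sigma' (enc S)));
  ve_complete : forall S S', is_pi S -> red_star S S' ->
    exists T, red_star (enc S) T /\ asymp T (enc S');
  ve_sound : forall S T, is_pi S -> red_star (enc S) T ->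
    exists S' T', red_star S S' /\ red_star T T' /\ asymp T' (enc S');
  ve_div_reflect : forall S, is_pi S -> diverges (enc S) -> diverges S;
  ve_success : forall S, is_pi S -> (reaches_success S <-> reaches_success (enc S))
}.

(* Let X := ✓ | Π_{n ∈ N} n<n>.0.  Since a <> b, the process [a=b]X is inert,
   so by success sensitiveness its encoding C(enc X) never reaches success,
   while enc X does.  If C could reduce to a context with an unguarded hole,
   the copy of enc X sitting in that hole could run to success inside
   C(enc X), a contradiction. *)
From Stdlib Require Import List Relations Lia FunctionalExtensionality.
Import ListNotations.

Lemma ren_ren P : forall s t, ren s (ren t P) = ren (fun n => s (t n)) P.
Proof.
  induction P; intros s t; simpl;
    try rewrite IHP; try rewrite IHP1; try rewrite IHP2; try reflexivity;
    f_equal; f_equal; apply functional_extensionality; intros [|m]; reflexivity.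
Qed.

Lemma fill_ren C : forall s Ps, fill (ren s C) Ps = ren s (fill C Ps).
Proof.
  induction C; intros s Ps; simpl;
    try rewrite IHC; try rewrite IHC1; try rewrite IHC2; try reflexivity.
  symmetry; apply ren_ren.
Qed.

Lemma up_injective s :
  (forall u v, s u = s v -> u = v) -> forall u v, up s u = up s v -> u = v.
Proof. intros Hs [|u] [|v]; simpl; intros E; try discriminate; auto. Qed.

Lemma swap01_injective u v : swap01 u = swap01 v -> u = v.
Proof. destruct u as [|[|u]], v as [|[|v]]; simpl; intros; try discriminate; auto. Qed.

Lemma sc_ren P Q s : sc P Q -> sc (ren s P) (ren s Q).
Proof.
  intros H; revert s; induction H; intros s; simpl;
    try (constructor; auto; fail); try (eapply sc_trans; eauto; fail).
  - replace (ren (up (up s)) (ren swap01 P)) with (ren swap01 (ren (up (up s)) P))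
      by (rewrite !ren_ren; f_equal; apply functional_extensionality;
          intros [|[|m]]; reflexivity).
    apply sc_res_swap.
  - replace (ren (up s) (ren S P)) with (ren S (ren s P)) by (rewrite !ren_ren; reflexivity).
    apply sc_res_par.
Qed.

Lemma red_ren P Q s : red P Q -> red (ren s P) (ren s Q).
Proof.
  intros H; revert s; induction H; intros s; simpl; try (constructor; auto; fail).
  - replace (ren s (ren (subst1 y) Q)) with (ren (subst1 (s y)) (ren (up s) Q))
      by (rewrite !ren_ren; f_equal; apply functional_extensionality;
          intros [|m]; reflexivity).
    constructor.
  - eapply red_sc; eauto using sc_ren.
Qed.

Lemma sc_fill C D Ps : sc C D -> sc (fill C Ps) (fill D Ps).
Proof.
  intros H; induction H; simpl; try (econstructor; eauto; fail).
  - rewrite fill_ren; apply sc_res_swap.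
  - rewrite fill_ren; apply sc_res_par.
Qed.

Lemma red_fill C D Ps : red C D -> red (fill C Ps) (fill D Ps).
Proof.
  intros H; induction H; simpl; try (constructor; auto; fail).
  - rewrite fill_ren; constructor.
  - eapply red_sc; eauto using sc_fill.
Qed.

Lemma red_star_map (f : term -> term) :
  (forall P Q, red P Q -> red (f P) (f Q)) ->
  forall P Q, red_star P Q -> red_star (f P) (f Q).
Proof.
  intros Hf P Q H; induction H.
  - apply rt_step; auto.
  - apply rt_refl.
  - eapply rt_trans; eauto.
Qed.

Lemma holes_below_ren P : forall s k, holes_below k (ren s P) <-> holes_below k P.
Proof. induction P; intros s k; simpl; firstorder. Qed.

Lemma sc_holes_below P Q k : sc P Q -> (holes_below k P <-> holes_below k Q).
Proof. intros H; induction H; simpl; try rewrite !holes_below_ren; firstorder. Qed.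

Lemma red_holes_below P Q k : red P Q -> holes_below k P -> holes_below k Q.
Proof.
  intros H; induction H; simpl; try rewrite !holes_below_ren; try tauto.
  rewrite (sc_holes_below _ _ k H), <- (sc_holes_below _ _ k H1); assumption.
Qed.

Lemma red_star_holes_below P Q k : red_star P Q -> holes_below k P -> holes_below k Q.
Proof. intros H; induction H; eauto using red_holes_below. Qed.

Lemma ung_refl P : ung P P.
Proof. destruct P; left; reflexivity. Qed.

Lemma ung_trans P : forall Q R, ung P Q -> ung Q R -> ung P R.
Proof.
  induction P; intros Q R [->|H1] H2; auto; simpl in H1 |- *; right; firstorder.
Qed.

Lemma ung_holes_below P : forall T k, ung P T -> holes_below k P -> holes_below k T.
Proof. induction P; intros T k [->|H1]; auto; simpl in H1 |- *; firstorder. Qed.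

Lemma ung_fill C : forall T Ps, ung C T -> ung (fill C Ps) (fill T Ps).
Proof.
  induction C; intros T Ps [->|H1]; try apply ung_refl; simpl in H1 |- *;
    try contradiction; right; firstorder.
Qed.

Lemma successful_ren P s : successful P -> successful (ren s P).
Proof.
  unfold successful; revert s; induction P; intros s [H1|H1];
    try discriminate; simpl in H1 |- *; try (left; reflexivity); right; firstorder.
Qed.

(* A reduction of an unguarded subterm is a reduction of the whole term, up to
   the structural congruences that bring the subterm to the top. *)
Lemma ung_red P : forall U U', ung P U -> red U U' ->
  exists P', red P P' /\ ung P' U'.
Proof.
  induction P; intros U U' [->|H1] Hr;
    try (exists U'; split; [exact Hr | apply ung_refl]); simpl in H1;
    try contradiction.
  - destruct H1 as [<- H1]; destruct (IHP _ _ H1 Hr) as [P' [HP HU]].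
    exists P'; split; [exact (red_sc _ _ _ _ (sc_match_refl _ _) HP (sc_refl _)) | exact HU].
  - destruct H1 as [H1|H1].
    + destruct (IHP1 _ _ H1 Hr) as [P' [HP HU]]; exists P'; split; auto using red_sum.
    + destruct (IHP2 _ _ H1 Hr) as [P' [HP HU]]; exists P'; split; auto.
      eapply red_sc; [apply sc_sum_comm | apply red_sum, HP | apply sc_refl].
  - destruct H1 as [H1|H1].
    + destruct (IHP1 _ _ H1 Hr) as [P' [HP HU]]; exists (Par P' P2); split.
      * apply red_par, HP.
      * simpl; auto.
    + destruct (IHP2 _ _ H1 Hr) as [P' [HP HU]]; exists (Par P' P1); split.
      * eapply red_sc; [apply sc_par_comm | apply red_par, HP | apply sc_refl].
      * simpl; auto.
  - destruct (IHP _ _ H1 Hr) as [P' [HP HU]]; exists (Res P'); split.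
    + apply red_res, HP.
    + simpl; auto.
  - destruct (IHP _ _ H1 Hr) as [P' [HP HU]]; exists (Par P' (Bang P)); split.
    + eapply red_sc; [apply sc_bang_unfold | apply red_par, HP | apply sc_refl].
    + simpl; auto.
Qed.

Lemma ung_red_star U U' : red_star U U' ->
  forall P, ung P U -> exists P', red_star P P' /\ ung P' U'.
Proof.
  intros H; induction H as [U U' Hr | U | U V W _ IH1 _ IH2]; intros P HU.
  - destruct (ung_red _ _ _ HU Hr) as [P' [HP HU']]; exists P'; split; [apply rt_step |]; assumption.
  - exists P; split; [apply rt_refl | exact HU].
  - destruct (IH1 _ HU) as [P1 [R1 U1]]; destruct (IH2 _ U1) as [P2 [R2 U2]].
    exists P2; split; [eapply rt_trans; eassumption | exact U2].
Qed.

Lemma reaches_success_red_star P Q :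
  red_star P Q -> reaches_success Q -> reaches_success P.
Proof. intros H [R [HR HS]]; exists R; split; [eapply rt_trans; eassumption | exact HS]. Qed.

Lemma reaches_success_ren P s : reaches_success P -> reaches_success (ren s P).
Proof.
  intros [Q [HQ HS]]; exists (ren s Q); split.
  - exact (red_star_map (ren s) (fun P Q H => red_ren P Q s H) _ _ HQ).
  - apply successful_ren, HS.
Qed.

Lemma reaches_success_ung P U : ung P U -> reaches_success U -> reaches_success P.
Proof.
  intros HU [Q [HQ HS]].
  destruct (ung_red_star _ _ HQ _ HU) as [P' [HP HP']].
  exists P'; split; [exact HP | exact (ung_trans _ _ _ HP' HS)].
Qed.

Lemma reaches_success_fill C C' i s Ps :
  red_star C C' -> ung C' (Hole i s) -> reaches_success (nth i Ps Nil) ->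
  reaches_success (fill C Ps).
Proof.
  intros HC HU HS.
  apply (reaches_success_red_star _ (fill C' Ps)).
  - exact (red_star_map (fun D => fill D Ps) (fun D D' H => red_fill D D' Ps H) _ _ HC).
  - apply (reaches_success_ung _ _ (ung_fill _ _ Ps HU)), reaches_success_ren, HS.
Qed.

Fixpoint inert (P : term) : Prop :=
  match P with
  | Nil => True
  | Match a b Q => a <> b \/ inert Q
  | Sum P Q | Par P Q => inert P /\ inert Q
  | Res Q | Bang Q => inert Q
  | _ => False
  end.

Lemma inert_ren P : forall s, (forall u v, s u = s v -> u = v) ->
  (inert (ren s P) <-> inert P).
Proof.
  induction P; intros s Hs; simpl; try tauto.
  - rewrite IHP by exact Hs.
    split; intros [H|H]; auto; left; intro E; apply H; subst; auto.
  - rewrite IHP1, IHP2 by exact Hs; tauto.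
  - rewrite IHP1, IHP2 by exact Hs; tauto.
  - apply IHP, up_injective, Hs.
  - apply IHP, Hs.
Qed.

Lemma sc_inert P Q : sc P Q -> (inert P <-> inert Q).
Proof.
  intros H; induction H; simpl; try tauto.
  - rewrite inert_ren by exact swap01_injective; tauto.
  - rewrite inert_ren by (intros u v E; injection E; auto); tauto.
Qed.

Lemma inert_irreducible P Q : red P Q -> ~ inert P.
Proof.
  intros H; induction H; simpl; try tauto.
  rewrite (sc_inert _ _ H); assumption.
Qed.

Lemma inert_unsuccessful P : inert P -> ~ successful P.
Proof. unfold successful; induction P; simpl; intros I [H|H]; try discriminate; firstorder. Qed.

Lemma inert_no_success P : inert P -> ~ reaches_success P.
Proof.
  intros I [Q [HQ HS]].
  assert (P = Q) as <-.
  { clear HS; induction HQ as [P Q Hr | | P Q R _ IH1 _ IH2].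
    - exfalso; exact (inert_irreducible _ _ Hr I).
    - reflexivity.
    - specialize (IH1 I); subst; auto. }
  exact (inert_unsuccessful _ I HS).
Qed.

(* Its only role is to make fn([a=b](✓ | emit_names N)) = N ∪ {a,b}, so that
   the context C translates the match with this continuation. *)
Fixpoint emit_names (N : list name) : term :=
  match N with
  | [] => Nil
  | n :: N' => Par (Out n n Nil) (emit_names N')
  end.

Lemma fn_emit_names N n : fn (emit_names N) n <-> List.In n N.
Proof. induction N; simpl; try rewrite IHN; firstorder. Qed.

Lemma no_hole_emit_names N : no_hole (emit_names N).
Proof. induction N; simpl; auto. Qed.

Theorem lemma4 :
  forall (enc : term -> term) (k : nat) (phi : name -> nat -> name)
         (asymp : term -> term -> Prop),
    valid_encoding enc k phi asymp ->
    forall (N : list name) (a b : name), a <> b ->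
    forall C : term,
      (* C is the context C_[a=b]^{N u {a,b}} introduced by the encoding *)
      is_ctx_pinm 1 C ->
      (forall S, is_pi S ->
         fn_is (Match a b S) (a :: b :: N) ->
         enc (Match a b S) = fill C [enc S]) ->
      forall C' : term, red_star C C' -> ~ hole_unguarded C'.
Proof.
  intros enc k phi asymp Hv N a b Hab C [_ HC] Henc C' Hred [i [s Hu]].
  set (X := Par Succ (emit_names N)).
  assert (HX : is_pi X) by (split; [exact I | apply no_hole_emit_names]).
  assert (Hfn : fn_is (Match a b X) (a :: b :: N)).
  { intros n; simpl; rewrite fn_emit_names; intuition (subst; auto). }
  assert (Hi : i = 0).
  { pose proof (ung_holes_below _ _ 1 Hu (red_star_holes_below _ _ 1 Hred HC)).
    simpl in *; lia. }
  subst i.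
  apply (inert_no_success (Match a b X)); [simpl; auto |].
  apply (ve_success _ _ _ _ Hv (Match a b X) HX).
  rewrite (Henc X HX Hfn).
  apply (reaches_success_fill _ _ _ _ _ Hred Hu); simpl.
  apply (ve_success _ _ _ _ Hv _ HX).
  exists X; split; [apply rt_refl | right; left; left; reflexivity].
Qed.
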